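(* An uncountable separable metrizable space $X$ is a Lusin set if and only if $t(K)=\omega$ for every compact subset $K$ of $Q_p(X,\mathbb{R})$.
   Context: A function $f:X\to\mathbb{R}$ is quasicontinuous if for every $x\in X$, every open $V\ni f(x)$ and every open $U\ni x$ there is a nonempty open $W\subseteq U$ with $f(W)\subseteq V$. $Q_p(X,\mathbb{R})$ is the set of all quasicontinuous real-valued functions on $X$ with the topology of pointwise convergence. A separable metrizable space $X$ is a Lusin set ($\aleph_1$-Lusin set) if $X$ is uncountable and $X\cap M$ is countable for every meager subset $M$ of $X$. $t(K)=\omega$ means: for every $z\in K$ and $A\subseteq K$ with $z\in\overline{A}$ there is a countable $B\subseteq A$ with $z\in\overline{B}$. *)

From HB Require Import structures.
From mathcomp Require Import all_boot all_order all_algebra.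
From mathcomp Require Import all_classical all_reals topology function_spaces.
Set Implicit Arguments. Unset Strict Implicit. Unset Printing Implicit Defensive.
Import Order.TTheory GRing.Theory Num.Theory.
Local Open Scope classical_set_scope.

Definition nowhere_dense (T : topologicalType) (S : set T) :=
  (closure S)° = set0.

Definition meager (T : topologicalType) (M : set T) :=
  exists F : nat -> set T, (forall n, nowhere_dense (F n)) /\ M `<=` \bigcup_n F n.

Definition separable_space (T : topologicalType) :=
  exists D : set T, countable D /\ dense D.

(* Lusin set: X uncountable and every meager subset of X is countable
   (equivalently X ∩ M countable for every meager M ⊆ X). *)
Definition Lusin_set (T : topologicalType) :=
  ~ countable [set: T] /\ forall M : set T, meager M -> countable M.

Definition quasicontinuous (X Y : topologicalType) (f : X -> Y) :=
  forall (x : X) (V : set Y) (U : set X), open V -> V (f x) -> open U -> U x ->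
    exists W : set X, [/\ open W, W !=set0, W `<=` U & f @` W `<=` V].

(* Countable tightness t(K) = omega of a subset K of a topological space,
   closures taken in the ambient space (for z in K this coincides with the
   closure in the subspace K). *)
Definition countable_tightness (T : topologicalType) (K : set T) :=
  forall z : T, K z -> forall A : set T, A `<=` K -> closure A z ->
    exists B : set T, [/\ B `<=` A, countable B & closure B z].

From HB Require Import structures.
From mathcomp Require Import all_boot all_order all_algebra interval_inference.
From mathcomp Require Import all_classical all_reals topology function_spaces normedtype.

(* (=>) Let z be in the closure of A inside a compact set K of quasicontinuous
   functions.  The discontinuity set of a quasicontinuous function is meager,
   hence countable in a Lusin set, so z is continuous outside a countable set C,
   which we enlarge by a countable dense set.  A diagonal sequence in A that
   converges to z on C has a cluster point w in K; w agrees with z on C, and a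
   quasicontinuous function agreeing with z on a dense set and at the
   discontinuities of z equals z.  So z is in the closure of that sequence.

   (<=) If X is not Lusin, it has an uncountable nowhere dense set S.  In a
   second countable regular space S lies in the common boundary of two disjoint
   open sets Q and B avoiding S.  The functions equal to 0 on cl Q \ S, to 1
   off cl Q, and {0,1}-valued on S form a compact set of quasicontinuous
   functions; the one equal to 1 on S is in the closure of those with finitely
   many 1's on S, but not in the closure of countably many of them. *)

Import Order.TTheory GRing.Theory Num.Theory.
Local Open Scope classical_set_scope.
Local Open Scope ring_scope.

Lemma countableU {T} (A B : set T) : countable A -> countable B -> countable (A `|` B).
Proof. by move=> cA cB; rewrite -bigcup2inE; apply: bigcup_countable => // -[|[|]]. Qed.

Lemma countable_sub_range {T} (x0 : T) {A : set T} :
  countable A -> exists e : nat -> T, A `<=` range e.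
Proof.
move=> /pfcard_geP[->|/surjfunPex[e ->]]; first by exists (fun=> x0).
by exists e.
Qed.

Lemma eq_of_dist_lt (R : numFieldType) (a b : R) :
  (forall e, 0 < e -> `|a - b| < e) -> a = b.
Proof.
move=> ab; apply/eqP; rewrite -subr_eq0 -normr_le0.
by apply/ler_addgt0Pr => e e0; rewrite add0r ltW ?ab.
Qed.

Lemma meager_uncountable_nowhere_dense {T : topologicalType} {M : set T} :
  meager M -> ~ countable M -> exists S : set T, nowhere_dense S /\ ~ countable S.
Proof.
move=> [F [ndF MF]] ncM.
have [n ncMF] : exists n, ~ countable (M `&` F n).
  apply: contrapT => /forallNP cMF; apply: ncM.
  have : countable (\bigcup_n (M `&` F n)).
    by apply: bigcup_countable => // n _; apply: contrapT; exact: cMF.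
  apply: sub_countable; apply: subset_card_le => x Mx.
  by have [k _ Fx] := MF x Mx; exists k.
exists (M `&` F n); split=> //.
rewrite /nowhere_dense -subset0 -(ndF n); apply/interiorS/closureS; exact: subIsetr.
Qed.

Section Quasicontinuity.
Context {R : realType} {T : topologicalType}.

Lemma quasicontinuous_discontinuity_meager (f : T -> R^o) :
  quasicontinuous f -> meager [set x | ~ {for x, continuous f}].
Proof.
move=> qf.
pose F n := [set x | forall U, nbhs x U -> exists y, U y /\ n.+1%:R^-1 <= `|f y - f x|].
exists F; split=> [n|x fx].
  rewrite /nowhere_dense -subset0 => x clFx.
  set d : R := n.+1%:R^-1.
  have d2 : 0 < d / 2 by rewrite divr_gt0 // invr_gt0.
  have [W [oW [w Ww] WU fWV]] := qf x (ball (f x) (d / 2)) _ (ball_open _ _)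
    (ballxx _ d2) (open_interior _) clFx.
  have [y0 [Fy0 Wy0]] := interior_subset (WU _ Ww) W (open_nbhs_nbhs (conj oW Ww)).
  have [y [Wy]] := Fy0 W (open_nbhs_nbhs (conj oW Wy0)).
  have near_fx u : W u -> `|f x - f u| < d / 2 by move=> Wu; apply: fWV; exists u.
  apply/negP; rewrite -ltNge (le_lt_trans (ler_distD (f x) _ _)) //.
  by rewrite [X in _ < X]splitr ltrD ?near_fx // distrC near_fx.
apply: contrapT => nFx; apply: fx => N /nbhs_ballP[e /= e0 eN].
have [n] := ltr_add_invr e0; rewrite add0r => ne.
have /existsNP[U /not_implyP[nU /forallNP Ux]] : ~ F n x by move=> Fx; apply: nFx; exists n.
apply: filterS nU => y Uy; apply: eN; rewrite /ball /= distrC.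
by apply: lt_trans ne; rewrite ltNge; apply/negP => le; apply: (Ux y).
Qed.

Lemma quasicontinuous_eq {w z : T -> R^o} {D : set T} :
  quasicontinuous w -> dense D -> (forall x, D x -> w x = z x) ->
  (forall x, ~ {for x, continuous z} -> w x = z x) -> w = z.
Proof.
move=> qw dD wzD wzC; apply/funext => x.
have [cz|] := pselect {for x, continuous z}; last exact: wzC.
apply: eq_of_dist_lt => e e0; have e2 : 0 < e / 2 by rewrite divr_gt0.
have := cz _ (nbhsx_ballx (z x) _ e2); rewrite nbhsE => -[U [oU Ux] Uz].
have [W [oW W0 WU wWV]] := qw x _ U (ball_open _ _) (ballxx _ e2) oU Ux.
have [d [Wd Dd]] := dD W W0 oW.
rewrite (splitr e) (le_lt_trans (ler_distD (w d) _ _)) // ltrD //.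
  by apply: wWV; exists d.
by rewrite wzD // distrC; apply: Uz; apply: WU.
Qed.

End Quasicontinuity.

Lemma nbhs_ptws_finite {U : topologicalType} {V : uniformType} (z : {ptws U -> V}) N :
  nbhs z N -> exists2 F : set U, finite_set F & forall f, (forall x, F x -> f x = z x) -> N f.
Proof.
pose G := [set P : set {ptws U -> V} |
  exists2 F : set U, finite_set F & forall f, (forall x, F x -> f x = z x) -> P f].
have FG : Filter G.
  split; first by exists set0.
    move=> P P' [F1 fF1 H1] [F2 fF2 H2]; exists (F1 `|` F2); first by rewrite finite_setU.
    by move=> f zf; split; [apply: H1|apply: H2] => x Fx; apply: zf; [left|right].
  by move=> P P' PP' [F fF H]; exists F => // f /H /PP'.
have : {ptws, G --> z}.
  apply/(pointwise_cvgP z FG) => t M /nbhs_singleton Mzt.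
  by exists [set t]; [exact: finite_set1|move=> f /(_ t erefl) /= ->].
by move=> Gz /Gz.
Qed.

Section Pointwise.
Context {R : realType} {T : topologicalType}.

Lemma near_ptws_coord (z : {ptws T -> R^o}) x e :
  0 < e -> \forall g \near z, `|z x - g x| < e.
Proof. by move=> e0; exact: (@proj_continuous T (fun=> R^o) x z _ (nbhsx_ballx _ _ e0)). Qed.

Lemma ptws_closure_seq {A : set {ptws T -> R^o}} {z} (e : nat -> T) :
  closure A z -> exists a : nat -> {ptws T -> R^o},
    (forall m, A (a m)) /\ forall k m, (k < m)%N -> `|z (e k) - a m (e k)| < m.+1%:R^-1.
Proof.
move=> clA.
have /choice[a Ha] m : exists g,
    A g /\ forall i : 'I_m, `|z (e i) - g (e i)| < m.+1%:R^-1.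
  have [|g [Ag zg]] := clA [set g | forall i : 'I_m, `|z (e i) - g (e i)| < m.+1%:R^-1].
    apply: filter_forall (nbhs_filter z) _ => i.
    by apply: near_ptws_coord; rewrite invr_gt0.
  by exists g.
by exists a; split=> [m|k m km]; [exact: (Ha m).1|exact: (Ha m).2 (Ordinal km)].
Qed.

Lemma cluster_seq_coord {a : nat -> {ptws T -> R^o}} {z w x k} :
  (forall m, (k < m)%N -> `|z x - a m x| < m.+1%:R^-1) ->
  cluster (a @ \oo) w -> w x = z x.
Proof.
move=> az clw; apply: eq_of_dist_lt => e e0.
have e2 : 0 < e / 2 by rewrite divr_gt0.
have tail : \forall m \near \oo, (k < m)%N /\ m.+1%:R^-1 < e / 2.
  by near=> m; split; near: m;
    [exact: nbhs_infty_gt|have := near_infty_natSinv_lt (PosNum e2)].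
have Ftail : (a @ \oo) (a @` [set m | (k < m)%N /\ m.+1%:R^-1 < e / 2]).
  by apply: filterS tail => m tm; exists m.
have [_ [[m [km me] <-] wm]] := clw _ _ Ftail (near_ptws_coord w x _ e2).
rewrite (splitr e) (le_lt_trans (ler_distD (a m x) _ _)) // ltrD // distrC.
exact: lt_trans (az m km) me.
Unshelve. all: by end_near.
Qed.

End Pointwise.

Lemma Lusin_countable_tightness {R : realType} {T : topologicalType} :
  separable_space T -> Lusin_set T ->
  forall K : set {ptws T -> R^o},
    K `<=` (fun f : {ptws T -> R^o} => quasicontinuous f) ->
    compact K -> countable_tightness K.
Proof.
move=> [D [cD dD]] [ncT meager_countable] K Kqc cK z Kz A AK clA.
have [x0 _] : [set: T] !=set0.
  by apply/set0P/eqP => T0; apply: ncT; rewrite T0; exact: countable0.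
set C := D `|` [set x | ~ {for x, continuous z}].
have cC : countable C.
  by apply: countableU => //; apply/meager_countable/quasicontinuous_discontinuity_meager/Kqc.
have [e Ce] := countable_sub_range x0 cC.
have [a [Aa az]] := ptws_closure_seq e clA.
have [w [Kw clw]] : K `&` cluster (a @ \oo) !=set0.
  by apply: cK; exists 0%N => // m _; exact/AK/Aa.
have wzC x : C x -> w x = z x by move=> /Ce[k _ <-]; exact: cluster_seq_coord (az k) clw.
have wz : w = z.
  by apply: (quasicontinuous_eq (Kqc _ Kw) dD) => x Cx; apply: wzC; [left|right].
exists (range a); split.
- by move=> _ [m _ <-].
- by apply: sub_countable (card_image_le _ _) _; exact: countableP.
- by rewrite -wz => N; apply: clw; exists 0%N => // m _; exists m.
Qed.

Lemma metric_ball_open {R : realType} {X : metricType R} (x : X) r : open (ball x r).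
Proof.
rewrite openE => y; rewrite ballEmdist /= => xy; apply/nbhs_ballP.
exists (r - mdist x y) => [|z]; first by rewrite /= subr_gt0.
rewrite !ballEmdist /= ltrBrDl => yz.
exact: le_lt_trans (metric_triangle x y z) yz.
Qed.

Lemma separable_metric_second_countable {R : realType} {X : metricType R} :
  separable_space X -> @second_countable X.
Proof.
move=> [D [cD dD]].
exists [set ball d n.+1%:R^-1 | d in D & n in [set: nat]].
  by rewrite image2E; apply: sub_countable (card_image_le _ _) _; exact: countableX.
split=> [_ [d _ [n _ <-]]|x N /nbhs_ballP[e /= e0 eN]]; first exact: metric_ball_open.
have [n] := ltr_add_invr (divr_gt0 e0 (ltr0Sn _ 1)); rewrite add0r => ne.
have [|d [xd Dd]] := dD (ball x n.+1%:R^-1) _ (metric_ball_open _ _).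
  by exists x; apply: ballxx; rewrite invr_gt0.
exists (ball d n.+1%:R^-1); first by split; [exists d => //; exists n|exact: ball_sym].
move=> y dy; apply: eN; rewrite (splitr e).
by apply: le_ball (ball_triangle xd dy); rewrite lerD // ltW.
Qed.

Lemma second_countable_seq {T : topologicalType} : @second_countable T ->
  exists O : nat -> set T,
    (forall m, open (O m)) /\ forall x N, nbhs x N -> exists m, O m x /\ O m `<=` N.
Proof.
move=> [B /pfcard_geP cB [Bopen Bbasis]].
have [B0|/surjfunPex[O BO]] := cB.
  exists (fun=> set0); split=> [m|x N /(Bbasis x)[U [BU _] _]]; first exact: open0.
  by rewrite B0 in BU.
exists O; split=> [m|x N /(Bbasis x)[U [BU Ux] UN]].
  by apply: Bopen; rewrite BO; exists m.
by move: BU; rewrite BO => -[m _ Om]; exists m; rewrite Om.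
Qed.

Section CommonBoundary.
Context {T : topologicalType} {S : set T}.
Hypotheses (regT : regular_space T) (ndS : nowhere_dense S).

Lemma shrink_off_nowhere_dense {W : set T} : open W -> W !=set0 ->
  exists V, [/\ open V, V !=set0 & closure V `<=` W `&` ~` closure S].
Proof.
move=> oW [w Ww].
have [y [Wy nSy]] : exists y, W y /\ ~ closure S y.
  apply: contrapT => /forallNP nW; suff : (closure S)° w by rewrite ndS.
  apply: filterS (open_nbhs_nbhs (conj oW Ww)) => y Wy.
  by apply: contrapT => nSy; apply: (nW y).
have oG : open (W `&` ~` closure S) by apply: openI => //; exact/closed_openC/closed_closure.
have [M yM MG] := regT y _ (open_nbhs_nbhs (conj oG (conj Wy nSy))).
exists M°; split; [exact: open_interior|by exists y|].
by move=> x /(closureS (@interior_subset _ M))/MG.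
Qed.

Definition admissible (Z U : set T) (P : set T * set T) :=
  [/\ open P.1, open P.2, P.1 `&` P.2 = set0,
      closure P.1 `|` closure P.2 `<=` U `\` (Z `|` S)
    & U `&` S !=set0 -> P.1 !=set0 /\ P.2 !=set0].

Lemma admissible_exists (Z U : set T) : open U -> closed Z -> Z `&` S = set0 ->
  exists P, admissible Z U P.
Proof.
move=> oU cZ ZS.
have [[s [Us Ss]]|US0] := pselect (U `&` S !=set0); last first.
  exists (set0, set0); split=> //=; [exact: open0|exact: open0|exact: setI0|].
  by rewrite closure0 setU0.
have nZs : ~ Z s by move=> Zs; have : (Z `&` S) s by []; rewrite ZS.
set G := U `&` ~` Z.
have oG : open G by apply: openI => //; exact: closed_openC.
have [V1 [oV1 V10 V1G]] := shrink_off_nowhere_dense oG (ex_intro _ s (conj Us nZs)).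
set G2 := G `&` ~` closure V1.
have oG2 : open G2 by apply: openI => //; exact/closed_openC/closed_closure.
have G2s : G2 s by split=> // /V1G[_]; apply; exact: subset_closure.
have [V2 [oV2 V20 V2G2]] := shrink_off_nowhere_dense oG2 (ex_intro _ s G2s).
exists (V1, V2); split=> //=.
- apply/seteqP; split=> // x [V1x /subset_closure/V2G2[[_ nV1x] _]].
  by apply: nV1x; exact: subset_closure.
- by move=> x [/V1G[[Ux nZx] nSx]|/V2G2[[[Ux nZx] _] nSx]];
    split=> // -[//|/subset_closure].
Qed.

Definition next_pair (Z U : set T) : set T * set T := xget (set0, set0) (admissible Z U).

Lemma next_pair_admissible {Z U : set T} : open U -> closed Z -> Z `&` S = set0 ->
  admissible Z U (next_pair Z U).
Proof. by move=> oU cZ ZS; apply: xgetPex; exact: admissible_exists. Qed.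

Context {O : nat -> set T}.
Hypothesis oO : forall m, open (O m).

(* Stage n puts the two halves of pair_at n into Q and B, inside O n and away
   from the closed set claimed by the earlier stages, so pieces of different
   stages never meet; since O is a base, S adheres to both unions. *)
Fixpoint claimed (n : nat) : set T :=
  if n is m.+1 then
    let P := next_pair (claimed m) (O m) in claimed m `|` closure P.1 `|` closure P.2
  else set0.

Definition pair_at n := next_pair (claimed n) (O n).

Lemma claimed_closed_disjoint n : closed (claimed n) /\ claimed n `&` S = set0.
Proof.
elim: n => [|n [cZ ZS]] /=; first by split; [exact: closed0|exact: set0I].
have [_ _ _ PZS _] := next_pair_admissible (oO n) cZ ZS.
split; first by apply: closedU; [apply: closedU => //|]; exact: closed_closure.
apply/seteqP; split=> // x [[[Zx|Px]|Px] Sx].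
- by have : (claimed n `&` S) x by []; rewrite ZS.
- by have [_] := PZS x (or_introl Px); apply; right.
- by have [_] := PZS x (or_intror Px); apply; right.
Qed.

Lemma pair_at_admissible n : admissible (claimed n) (O n) (pair_at n).
Proof. by have [cZ ZS] := claimed_closed_disjoint n; exact: next_pair_admissible. Qed.

Lemma claimed_homo : {homo claimed : m n / (m <= n)%N >-> m `<=` n}.
Proof.
move=> m; elim=> [|n IH]; first by rewrite leqn0 => /eqP ->.
by rewrite leq_eqVlt => /orP[/eqP -> //|/IH mn x /mn]; left; left.
Qed.

Lemma pair_at_claimed {m n} : (m < n)%N ->
  closure (pair_at m).1 `|` closure (pair_at m).2 `<=` claimed n.
Proof. by move=> /claimed_homo mn x [Px|Px]; apply: mn; [left; right|right]. Qed.

Lemma pair_at_disjoint m n : (pair_at m).1 `&` (pair_at n).2 = set0.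
Proof.
apply/seteqP; split=> // x [Px]; have [mn|nm|<-] := ltngtP m n => Qx.
- have [_ _ _ sub _] := pair_at_admissible n.
  have [_] := sub x (or_intror (subset_closure Qx)); apply; left.
  exact: pair_at_claimed mn _ (or_introl (subset_closure Px)).
- have [_ _ _ sub _] := pair_at_admissible m.
  have [_] := sub x (or_introl (subset_closure Px)); apply; left.
  exact: pair_at_claimed nm _ (or_intror (subset_closure Qx)).
- by have [_ _ PQ _ _] := pair_at_admissible m; rewrite -PQ.
Qed.

Lemma pair_at_sub {n} : (pair_at n).1 `|` (pair_at n).2 `<=` O n `\` S.
Proof.
have [_ _ _ sub _] := pair_at_admissible n.
move=> x /subset_closure; rewrite closureU => /sub[Ox nZS].
by split=> // Sx; apply: nZS; right.
Qed.

Hypothesis O_base : forall x N, nbhs x N -> exists m, O m x /\ O m `<=` N.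

Lemma common_boundary_exists : exists Q B : set T,
  [/\ open Q, open B, Q `&` B = set0, Q `&` S = set0 & S `<=` closure Q `&` closure B].
Proof.
exists (\bigcup_n (pair_at n).1), (\bigcup_n (pair_at n).2); split.
- by apply: bigcup_open => n _; have [] := pair_at_admissible n.
- by apply: bigcup_open => n _; have [] := pair_at_admissible n.
- apply/seteqP; split=> // x [[m _ Px] [n _ Qx]].
  by have : ((pair_at m).1 `&` (pair_at n).2) x by []; rewrite pair_at_disjoint.
- apply/seteqP; split=> // x [[m _ Px] Sx].
  by have [_] := pair_at_sub _ (or_introl Px).
- move=> s Ss; split=> N /O_base[m [Oms OmN]];
    have [_ _ _ _ /(_ (ex_intro _ s (conj Oms Ss)))[[y Py] [y' Qy]]] := pair_at_admissible m.
  + by exists y; split; [exists m|apply/OmN; have [] := pair_at_sub _ (or_introl Py)].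
  + by exists y'; split; [exists m|apply/OmN; have [] := pair_at_sub _ (or_intror Qy)].
Qed.

End CommonBoundary.

Lemma nowhere_dense_in_common_boundary {T : topologicalType} {S : set T} :
  regular_space T -> @second_countable T -> nowhere_dense S ->
  exists Q B : set T,
    [/\ open Q, open B, Q `&` B = set0, Q `&` S = set0 & S `<=` closure Q `&` closure B].
Proof.
move=> regT /second_countable_seq[O [oO O_base]] ndS.
by have := common_boundary_exists regT ndS oO O_base.
Qed.

Section Counterexample.
Variable R : realType.
Context {T : topologicalType} {S Q B : set T}.
Hypotheses (oQ : open Q) (oB : open B) (QB : Q `&` B = set0) (QS : Q `&` S = set0)
  (SQB : S `<=` closure Q `&` closure B) (ncS : ~ countable S).

Let base (x : T) : R := if pselect (closure Q x) then 0 else 1.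
Let values (x : T) : set R^o := if pselect (S x) then [set 0; 1] else [set base x].
Let K := [set f : {ptws T -> R^o} | forall x, values x (f x)].

Let K_compact : compact K.
Proof.
apply: tychonoff => x; rewrite /values; case: pselect => Sx; last exact: compact_set1.
by apply: compactU; exact: compact_set1.
Qed.

Let base_S x : S x -> base x = 0.
Proof. by move=> /SQB[clQx _]; rewrite /base; case: pselect. Qed.

Let K_S {f x} : K f -> S x -> f x = 0 \/ f x = 1.
Proof. by move=> /(_ x); rewrite /values; case: pselect. Qed.

Let K_notS {f x} : K f -> ~ S x -> f x = base x.
Proof. by move=> /(_ x); rewrite /values; case: pselect. Qed.

Let K_Q {f x} : K f -> Q x -> f x = 0.
Proof.
move=> Kf Qx; have nSx : ~ S x by move=> Sx; have : (Q `&` S) x by []; rewrite QS.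
by rewrite K_notS // /base; case: pselect => // -[]; exact: subset_closure.
Qed.

Let K_not_closureQ {f x} : K f -> ~ closure Q x -> f x = 1.
Proof.
move=> Kf nQx; have nSx : ~ S x by move=> /SQB[].
by rewrite K_notS // /base; case: pselect.
Qed.

Let B_not_closureQ x : B x -> ~ closure Q x.
Proof.
move=> Bx /(_ B (open_nbhs_nbhs (conj oB Bx)))[y Qy].
by have : (Q `&` B) y by []; rewrite QB.
Qed.

Let K_quasicontinuous f : K f -> quasicontinuous f.
Proof.
move=> Kf x V U oV Vfx oU Ux.
suff [W [oW W0 WU fW]] : exists W, [/\ open W, W !=set0, W `<=` U & forall w, W w -> f w = f x].
  by exists W; split=> // _ [w Ww <-]; rewrite fW.
have meetU A : closure A x -> U `&` A !=set0.
  by move=> /(_ U (open_nbhs_nbhs (conj oU Ux))); rewrite setIC.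
have [clQx|nclQx] := pselect (closure Q x); last first.
  exists (U `&` ~` closure Q); split; [|by exists x|by move=> ? []|].
  - by apply: openI => //; exact/closed_openC/closed_closure.
  - by move=> w [_ nclQw]; rewrite !K_not_closureQ.
have : (S x /\ f x = 1) \/ f x = 0.
  have [Sx|nSx] := pselect (S x); first by case: (K_S Kf Sx); [right|left].
  by right; rewrite K_notS // /base; case: pselect.
case=> [[Sx fx1]|fx0].
- exists (U `&` B); split; [exact: openI|exact/meetU/(SQB x Sx).2|by move=> ? []|].
  by move=> w [_ Bw]; rewrite fx1 K_not_closureQ //; exact: B_not_closureQ.
- exists (U `&` Q); split; [exact: openI|exact: meetU|by move=> ? []|].
  by move=> w [_ Qw]; rewrite fx0 K_Q.
Qed.

Let z : {ptws T -> R^o} := fun x => if pselect (S x) then 1 else base x.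
Let A := [set f | K f /\ finite_set [set x | S x /\ f x = 1]].

Let Kz : K z.
Proof. by move=> x; rewrite /z /values; case: pselect => // Sx; right. Qed.

Let closure_A : closure A z.
Proof.
move=> N /nbhs_ptws_finite[F fF FN].
pose g : {ptws T -> R^o} := fun x => if pselect (F x) then z x else base x.
exists g; split; last by apply: FN => x Fx; rewrite /g; case: pselect => // nFx.
split.
  move=> x; rewrite /g; case: pselect => Fx; first exact: Kz.
  by rewrite /values; case: pselect => // Sx; left; exact: base_S.
apply: sub_finite_set fF => x [Sx]; rewrite /g; case: pselect => // nFx.
by rewrite base_S // => /eqP; rewrite eq_sym oner_eq0.
Qed.

Let K_not_countably_tight : ~ countable_tightness K.
Proof.
move=> /(_ z Kz A (fun f (Af : A f) => Af.1) closure_A)[C [CA cC clC]].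
set ones := \bigcup_(c in C) [set x | S x /\ c x = 1].
have cones : countable ones.
  by apply: bigcup_countable => // c Cc; exact/finite_set_countable/(CA c Cc).2.
have [s [Ss nones]] : exists s, S s /\ ~ ones s.
  apply: contrapT => /forallNP nS; apply: ncS; apply: sub_countable cones.
  by apply: subset_card_le => s Ss; apply: contrapT => nos; apply: (nS s).
have [c [Cc]] := clC _ (near_ptws_coord z s _ ltr01).
have cs0 : c s = 0.
  by case: (K_S (CA c Cc).1 Ss) => // cs1; case: nones; exists c.
by rewrite /= cs0 /z; case: pselect => // Ss'; rewrite subr0 normr1 ltxx.
Qed.

Lemma common_boundary_not_countably_tight : exists K : set {ptws T -> R^o},
  [/\ K `<=` (fun f : {ptws T -> R^o} => quasicontinuous f),
      compact K & ~ countable_tightness K].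
Proof.
by exists K; split; [exact: K_quasicontinuous|exact: K_compact|exact: K_not_countably_tight].
Qed.

End Counterexample.

Theorem corollary5p2 (R : realType) (X : metricType R) :
  separable_space X -> ~ countable [set: X] ->
  (Lusin_set X <->
   forall K : set {ptws X -> R^o},
     K `<=` (fun f : {ptws X -> R^o} => @quasicontinuous X R^o f) ->
     compact K -> countable_tightness K).
Proof.
move=> sepX ncX; split; first exact: Lusin_countable_tightness.
move=> tight; split=> // M meagerM; apply: contrapT => ncM.
have [S [ndS ncS]] := meager_uncountable_nowhere_dense meagerM ncM.
have [Q [B [oQ oB QB QS SQB]]] := nowhere_dense_in_common_boundary
  uniform_regular (separable_metric_second_countable sepX) ndS.
have [K [Kqc cK ntK]] := common_boundary_not_countably_tight R oQ oB QB QS SQB ncS.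
exact/ntK/tight.
Qed.
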